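(* Let $\lambda\in\Lambda^+$ and let $M$ be a $\mathfrak g$-submodule of $\mathcal V(\lambda)$. For $\alpha\in\mathbb N^m$ and $\mu\subseteq[1,n]$ put $M_{\alpha,\mu}=\{v\in L^0(\lambda): x^\alpha y_\mu\otimes v\in M\}$ and $M^\flat=\bigcap_{\alpha,\mu}M_{\alpha,\mu}$. If $M^\flat\neq0$, then $M=\mathcal V(\lambda)$.
   Context: $\mathbb F$ algebraically closed of characteristic $0$, $m,n\ge1$. $\mathcal R=\mathbb F[x_1,\dots,x_m]\otimes\Lambda(y_1,\dots,y_n)$ ($x_i$ even, $y_s$ odd); $x^\alpha=\prod x_i^{\alpha_i}$, $y_\mu=y_{j_1}\cdots y_{j_r}$ for $\mu=\{j_1<\dots<j_r\}$. $\mathfrak g=W(m,n)$ the Lie superalgebra of superderivations of $\mathcal R$, free over $\mathcal R$ on $\partial_i$ (even) and $D_t$ (odd); $\mathfrak g_0\cong\mathfrak{gl}(m|n)$. $L^0(\lambda)$ is the finite-dimensional irreducible $\mathfrak g_0$-module of highest weight $\lambda\in\Lambda^+$ (dominant integral), representation $\xi$. $\mathcal V(\lambda)=\mathcal R\otimes L^0(\lambda)$ with action (homogeneous $f,g$): $f\partial_i.(g\otimes v)=f\partial_i(g)\otimes v+\sum_j\partial_j(f)g\otimes\xi(x_j\partial_i)v+(-1)^{\wp(f)+\wp(g)+1}\sum_jD_j(f)g\otimes\xi(y_j\partial_i)v$, $fD_i.(g\otimes v)=fD_i(g)\otimes v+(-1)^{\wp(g)}\sum_j\partial_j(f)g\otimes\xi(x_jD_i)v+(-1)^{\wp(f)+1}\sum_jD_j(f)g\otimes\xi(y_jD_i)v$.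 *)

From HB Require Import structures.
From mathcomp Require Import all_boot all_order all_algebra.
From mathcomp Require Import finmap.
From mathcomp Require Import monalg.
Set Implicit Arguments.
Unset Strict Implicit.
Unset Printing Implicit Defensive.
Import GRing.Theory.
Local Open Scope ring_scope.

(* Monomials x^alpha y_mu of R = F[x_1..x_m] (x) Lambda(y_1..y_n):     *)
(* alpha : 'I_m -> nat,  mu : {set 'I_n}  (indices are 0-based).       *)
Definition Mon (m n : nat) := ({ffun 'I_m -> nat} * {set 'I_n})%type.

(* Index set of the variables z_a : a = inl i is x_i (even),
   a = inr s is y_s (odd).  z_a d_b (d = partial_i / D_s) spans g_0.   *)
Definition Idx (m n : nat) := ('I_m + 'I_n)%type.
Definition ipar (m n : nat) (a : Idx m n) : nat :=
  match a with inl _ => 0 | inr _ => 1 end.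

Section Defs.
Variables (F : fieldType) (m n d : nat).

Local Notation Mon := (Mon m n).
Local Notation Idx := (Idx m n).

Definition mpar (k : Mon) : nat := #|k.2|.

(* y_mu * y_nu = ysign mu nu * y_(mu :|: nu) *)
Definition ysign (mu nu : {set 'I_n}) : F :=
  if [disjoint mu & nu]
  then (-1) ^+ #|[set p : 'I_n * 'I_n | [&& p.1 \in mu, p.2 \in nu & (p.2 < p.1)%N]]|
  else 0.

Definition SMon := (F * Mon)%type.

Definition smul (p q : SMon) : SMon :=
  (p.1 * q.1 * ysign p.2.2 q.2.2,
   ([ffun i => p.2.1 i + q.2.1 i], p.2.2 :|: q.2.2)).

Definition sone (k : Mon) : SMon := (1, k).
Definition sscale (c : F) (p : SMon) : SMon := (c * p.1, p.2).

Definition pder (i : 'I_m) (k : Mon) : SMon :=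
  ((k.1 i)%:R, ([ffun j => if j == i then (k.1 j).-1 else k.1 j], k.2)).

(* D_s (x^alpha y_mu): left odd derivative *)
Definition oder (s : 'I_n) (k : Mon) : SMon :=
  (if s \in k.2 then (-1) ^+ #|[set l in k.2 | (l < s)%N]| else 0,
   (k.1, k.2 :\ s)).

(* R (x) L^0 with L^0 = F^d (column vectors) *)
Definition TL := {malg 'cV[F]_d [Mon]}.

(* the element (c x^alpha y_mu) (x) v *)
Definition tm (p : SMon) (v : 'cV[F]_d) : TL := << p.1 *: v *g p.2 >>.

Variable xi : Idx -> Idx -> 'M[F]_d.  (* xi a b = xi(z_a d_b) *)

(* (f partial_i).(g (x) v), f = x^alpha y_mu, g = x^beta y_nu *)
Definition act_pd (f : Mon) (i : 'I_m) (g : Mon) (v : 'cV[F]_d) : TL :=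
  tm (smul (sone f) (pder i g)) v
  + \sum_(j < m) tm (smul (pder j f) (sone g)) (xi (inl j) (inl i) *m v)
  + \sum_(j < n) tm (sscale ((-1) ^+ (mpar f + mpar g + 1))
                      (smul (oder j f) (sone g))) (xi (inr j) (inl i) *m v).

(* (f D_i).(g (x) v) *)
Definition act_od (f : Mon) (i : 'I_n) (g : Mon) (v : 'cV[F]_d) : TL :=
  tm (smul (sone f) (oder i g)) v
  + \sum_(j < m) tm (sscale ((-1) ^+ mpar g) (smul (pder j f) (sone g)))
                    (xi (inl j) (inr i) *m v)
  + \sum_(j < n) tm (sscale ((-1) ^+ (mpar f + 1)) (smul (oder j f) (sone g)))
                    (xi (inr j) (inr i) *m v).

Definition gact_pd (f : Mon) (i : 'I_m) (u : TL) : TL :=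
  \sum_(k <- msupp u) act_pd f i k u@_k.
Definition gact_od (f : Mon) (i : 'I_n) (u : TL) : TL :=
  \sum_(k <- msupp u) act_od f i k u@_k.

Definition tscale (c : F) (u : TL) : TL :=
  \sum_(k <- msupp u) << c *: u@_k *g k >>.

Variable P : 'M[F]_d. (* parity operator of L^0 : +1 on even, -1 on odd part *)

Definition tpar (u : TL) : TL :=
  \sum_(k <- msupp u) << (-1) ^+ mpar k *: (P *m u@_k) *g k >>.

(* (L^0, xi, P) is a finite-dimensional representation of the Lie
   superalgebra g_0 = gl(m|n) (basis z_a d_b, with
   [z_a d_b, z_c d_e] = delta_bc z_a d_e - (-1)^((|a|+|b|)(|c|+|e|)) delta_ea z_c d_b),
   xi(z_a d_b) having parity |a|+|b| w.r.t. the grading P. *)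
Definition is_gl_super_rep : Prop :=
  [/\ P *m P = 1,
      (forall a b, xi a b *m P = (-1) ^+ (ipar a + ipar b) *: (P *m xi a b)) &
      (forall a b c e,
        xi a b *m xi c e
        - (-1) ^+ ((ipar a + ipar b) * (ipar c + ipar e)) *: (xi c e *m xi a b)
        = (b == c)%:R *: xi a e
          - ((-1) ^+ ((ipar a + ipar b) * (ipar c + ipar e)) * (e == a)%:R) *: xi c b)].

Definition is_subspace (V : Type) (zero : V) (add : V -> V -> V)
  (scale : F -> V -> V) (S : V -> Prop) : Prop :=
  [/\ S zero, (forall u w, S u -> S w -> S (add u w)) &
      (forall c u, S u -> S (scale c u))].

Definition is_irreducible : Prop :=
  (0 < d)%N /\
  forall S : 'cV[F]_d -> Prop,
    is_subspace 0 +%R (fun c v => c *: v) S ->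
    (forall v, S v -> S (P *m v)) ->
    (forall a b v, S v -> S (xi a b *m v)) ->
    (forall v, S v -> v = 0) \/ (forall v, S v).

(* graded g-submodule of V(lambda) = R (x) L^0 *)
Definition is_g_submodule (M : TL -> Prop) : Prop :=
  [/\ is_subspace 0 +%R tscale M,
      (forall u, M u -> M (tpar u)),
      (forall f i u, M u -> M (gact_pd f i u)) &
      (forall f i u, M u -> M (gact_od f i u))].

Definition Mcomp (M : TL -> Prop) (k : Mon) (v : 'cV[F]_d) : Prop :=
  M << v *g k >>.

Definition Mflat (M : TL -> Prop) (v : 'cV[F]_d) : Prop :=
  forall k : Mon, Mcomp M k v.

End Defs.

From HB Require Import structures.
From mathcomp Require Import all_boot all_order all_algebra.
From mathcomp Require Import finmap monalg.
Set Implicit Arguments.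
Unset Strict Implicit.
Unset Printing Implicit Defensive.
Import GRing.Theory.
Local Open Scope ring_scope.

(* Acting with z_a d_b, realised as the vector field x_j d_b or y_j d_b,
   on x^alpha y_mu (x) v gives
     z_a d_b(x^alpha y_mu) (x) v
     + (-1)^((|a|+|b|)|mu|) x^alpha y_mu (x) xi(z_a d_b) v,
   because the coefficient z_a has derivative 1 in the direction z_a and 0
   in every other direction.  If v lies in M^flat, the first summand is in M
   for every monomial, hence so is the second: M^flat is a graded
   g_0-submodule of L^0(lambda).  Irreducibility then forces M^flat = L^0,
   i.e. M contains every x^alpha y_mu (x) v, and these span V(lambda). *)

Section Monomials.
Variables (F : fieldType) (m n d : nat).
Local Notation Mon := (Mon m n).
Local Notation SMon := (SMon F m n).

Definition xmon (j : 'I_m) : Mon := ([ffun l => (l == j) : nat], set0).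
Definition ymon (j : 'I_n) : Mon := ([ffun => 0%N], [set j]).

Lemma ysign_set0l (mu : {set 'I_n}) : ysign F set0 mu = 1.
Proof.
rewrite /ysign; have -> : [disjoint set0 & mu].
  by apply/eq_disjoint0 => x; rewrite inE.
suff -> : [set p : 'I_n * 'I_n | [&& p.1 \in set0, p.2 \in mu & (p.2 < p.1)%N]]
          = set0 by rewrite cards0 expr0.
by apply/setP => p; rewrite !inE.
Qed.

Lemma smul_pder_xmon_coef (j j' : 'I_m) (k : Mon) :
  (smul (pder F j' (xmon j)) (sone F k)).1 = (j' == j)%:R.
Proof. by rewrite /= ffunE ysign_set0l !mulr1. Qed.

Lemma smul_pder_xmon (j : 'I_m) (k : Mon) :
  smul (pder F j (xmon j)) (sone F k) = (1, k).
Proof.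
case: k => alpha mu; rewrite /smul /= ffunE eqxx ysign_set0l !mulr1 set0U.
by congr (_, (_, _)); apply/ffunP => l; rewrite !ffunE; case: eqP.
Qed.

Lemma smul_oder_xmon_coef (j : 'I_m) (j' : 'I_n) (k : Mon) :
  (smul (oder F j' (xmon j)) (sone F k)).1 = 0.
Proof. by rewrite /= in_set0 !mul0r. Qed.

Lemma smul_pder_ymon_coef (j : 'I_n) (j' : 'I_m) (k : Mon) :
  (smul (pder F j' (ymon j)) (sone F k)).1 = 0.
Proof. by rewrite /= ffunE !mul0r. Qed.

Lemma smul_oder_ymon_coef (j j' : 'I_n) (k : Mon) :
  (smul (oder F j' (ymon j)) (sone F k)).1 = (j' == j)%:R.
Proof.
rewrite /= in_set1 eq_sym; case: eqP => [<-|_]; last by rewrite !mul0r.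
have -> : [set l in [set j] | (l < j)%N] = set0.
  by apply/setP => l; rewrite !inE; case: eqP => // ->; rewrite ltnn.
by rewrite setDv ysign_set0l cards0 !mulr1.
Qed.

Lemma smul_oder_ymon (j : 'I_n) (k : Mon) :
  smul (oder F j (ymon j)) (sone F k) = (1, k).
Proof.
case: k => alpha mu; rewrite [LHS]surjective_pairing smul_oder_ymon_coef eqxx.
rewrite /smul /= setDv set0U; congr (_, (_, _)).
by apply/ffunP => l; rewrite !ffunE.
Qed.

Lemma big_msuppU (V : nmodType) (h : Mon -> 'cV[F]_d -> V) (k : Mon) v :
  (forall k', h k' 0 = 0) ->
  \sum_(k' <- msupp << v *g k >>) h k' << v *g k >>@_k' = h k v.
Proof.
move=> h0; rewrite msuppU; have [->|_] := eqVneq v 0.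
  by rewrite big_seq_fset0 h0.
by rewrite big_seq_fset1 mcoeffUU.
Qed.

Lemma mpar_ymon (j : 'I_n) : mpar (ymon j) = 1%N.
Proof. exact: cards1. Qed.

Lemma sscale_coef (c : F) (p : SMon) : (sscale c p).1 = c * p.1.
Proof. by []. Qed.

Lemma tm_coef0 (p : SMon) (w : 'cV[F]_d) : p.1 = 0 -> tm p w = 0.
Proof. by move=> p0; rewrite /tm p0 scale0r monalgU0. Qed.

Lemma tm0 (p : SMon) : tm p (0 : 'cV[F]_d) = 0.
Proof. by rewrite /tm scaler0 monalgU0. Qed.

Lemma sum_tm_delta (I : finType) (j : I) (p : I -> SMon) (w : I -> 'cV[F]_d) :
  (forall j', j' != j -> (p j').1 = 0) ->
  \sum_j' tm (p j') (w j') = tm (p j) (w j).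
Proof.
by move=> p0; rewrite (bigD1 j) //= big1 ?addr0 // => j' /p0; apply: tm_coef0.
Qed.

Lemma sum_tm_coef0 (I : finType) (p : I -> SMon) (w : I -> 'cV[F]_d) :
  (forall j', (p j').1 = 0) -> \sum_j' tm (p j') (w j') = 0.
Proof. by move=> p0; apply: big1 => j' _; apply: tm_coef0. Qed.

End Monomials.

Arguments xmon {m n}.
Arguments ymon {m n}.
Arguments sum_tm_delta {F m n d I} j {p w}.

Section MonomialActions.
Variables (F : fieldType) (m n d : nat).
Variables (xi : Idx m n -> Idx m n -> 'M[F]_d) (P : 'M[F]_d).
Local Notation Mon := (Mon m n).

Lemma act_pd_xmon (j i : 'I_m) (k : Mon) (v : 'cV[F]_d) :
  act_pd xi (xmon j) i k v =
  tm (smul (sone F (xmon j)) (pder F i k)) v + << xi (inl j) (inl i) *m v *g k >>.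
Proof.
rewrite /act_pd (sum_tm_delta j) => [|j' /negbTE nej]; last first.
  by rewrite smul_pder_xmon_coef nej.
rewrite sum_tm_coef0 ?addr0 => [|j']; last first.
  by rewrite sscale_coef smul_oder_xmon_coef mulr0.
by rewrite smul_pder_xmon /tm scale1r.
Qed.

Lemma act_od_xmon (j : 'I_m) (i : 'I_n) (k : Mon) (v : 'cV[F]_d) :
  act_od xi (xmon j) i k v =
  tm (smul (sone F (xmon j)) (oder F i k)) v
  + << (-1) ^+ mpar k *: (xi (inl j) (inr i) *m v) *g k >>.
Proof.
rewrite /act_od (sum_tm_delta j) => [|j' /negbTE nej]; last first.
  by rewrite sscale_coef smul_pder_xmon_coef nej mulr0.
rewrite sum_tm_coef0 ?addr0 => [|j']; last first.
  by rewrite sscale_coef smul_oder_xmon_coef mulr0.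
by rewrite smul_pder_xmon /tm sscale_coef mulr1.
Qed.

Lemma act_pd_ymon (j : 'I_n) (i : 'I_m) (k : Mon) (v : 'cV[F]_d) :
  act_pd xi (ymon j) i k v =
  tm (smul (sone F (ymon j)) (pder F i k)) v
  + << (-1) ^+ mpar k *: (xi (inr j) (inl i) *m v) *g k >>.
Proof.
rewrite /act_pd sum_tm_coef0 ?addr0 => [|j']; last exact: smul_pder_ymon_coef.
rewrite (sum_tm_delta j) => [|j' /negbTE nej]; last first.
  by rewrite sscale_coef smul_oder_ymon_coef nej mulr0.
rewrite smul_oder_ymon /tm sscale_coef mulr1 mpar_ymon addnC addnA addn1 !exprS.
by rewrite mulrA mulN1r opprK mul1r.
Qed.

Lemma act_od_ymon (j i : 'I_n) (k : Mon) (v : 'cV[F]_d) :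
  act_od xi (ymon j) i k v =
  tm (smul (sone F (ymon j)) (oder F i k)) v + << xi (inr j) (inr i) *m v *g k >>.
Proof.
rewrite /act_od sum_tm_coef0 ?addr0 => [|j']; last first.
  by rewrite sscale_coef smul_pder_ymon_coef mulr0.
rewrite (sum_tm_delta j) => [|j' /negbTE nej]; last first.
  by rewrite sscale_coef smul_oder_ymon_coef nej mulr0.
rewrite smul_oder_ymon /tm sscale_coef mulr1 mpar_ymon.
by rewrite expr2 mulrNN mulr1 scale1r.
Qed.

Lemma gact_pd_monomial (f : Mon) (i : 'I_m) (k : Mon) (v : 'cV[F]_d) :
  gact_pd xi f i << v *g k >> = act_pd xi f i k v.
Proof.
rewrite /gact_pd big_msuppU // => k'.
by rewrite /act_pd tm0 !big1 ?addr0 // => j _; rewrite mulmx0 tm0.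
Qed.

Lemma gact_od_monomial (f : Mon) (i : 'I_n) (k : Mon) (v : 'cV[F]_d) :
  gact_od xi f i << v *g k >> = act_od xi f i k v.
Proof.
rewrite /gact_od big_msuppU // => k'.
by rewrite /act_od tm0 !big1 ?addr0 // => j _; rewrite mulmx0 tm0.
Qed.

Lemma tscale_monomial (c : F) (k : Mon) (v : 'cV[F]_d) :
  tscale c << v *g k >> = << c *: v *g k >>.
Proof.
rewrite /tscale (big_msuppU (h := fun k' w => << c *: w *g k' >>)) => // k'.
by rewrite scaler0 monalgU0.
Qed.

Lemma tpar_monomial (k : Mon) (v : 'cV[F]_d) :
  tpar P << v *g k >> = << (-1) ^+ mpar k *: (P *m v) *g k >>.
Proof.
pose h k' w := << (-1) ^+ mpar k' *: (P *m w) *g k' >> : TL F m n d.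
rewrite /tpar (big_msuppU (h := h)) => // k'.
by rewrite /h mulmx0 scaler0 monalgU0.
Qed.

End MonomialActions.

Section Submodule.
Variables (F : fieldType) (m n d : nat).
Variables (xi : Idx m n -> Idx m n -> 'M[F]_d) (P : 'M[F]_d).
Variable M : TL F m n d -> Prop.
Hypothesis M_submod : is_g_submodule xi P M.
Local Notation Mon := (Mon m n).

Lemma submod_opp (u : TL F m n d) : M u -> M (- u).
Proof.
case: M_submod => -[_ _ MZ] _ _ _ /(MZ (-1)).
congr M; rewrite {2}(monalgE u) /tscale -sumrN; apply: eq_bigr => k _.
by rewrite scaleN1r monalgUN.
Qed.

Lemma submod_monomial_scale (c : F) (k : Mon) (w : 'cV[F]_d) :
  c != 0 -> M << c *: w *g k >> -> M << w *g k >>.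
Proof.
case: M_submod => -[_ _ MZ] _ _ _ c_neq0 /(MZ c^-1).
by rewrite tscale_monomial scalerA mulVf // scale1r.
Qed.

Lemma Mflat_tm (p : SMon F m n) (v : 'cV[F]_d) : Mflat M v -> M (tm p v).
Proof.
case: M_submod => -[_ _ MZ] _ _ _ Mv.
by rewrite /tm -tscale_monomial; apply/MZ/Mv.
Qed.

Lemma Mflat_cancel_tm (p : SMon F m n) (v w : 'cV[F]_d) (c : F) (k : Mon) :
  Mflat M v -> c != 0 -> M (tm p v + << c *: w *g k >>) -> M << w *g k >>.
Proof.
case: M_submod => -[_ MD _] _ _ _ Mv c_neq0 Mpw.
apply: (submod_monomial_scale c_neq0).
rewrite -(addKr (tm p v) << c *: w *g k >>).
by apply: MD Mpw; apply/submod_opp/Mflat_tm.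
Qed.

Lemma Mflat_subspace :
  is_subspace 0 +%R (fun c (v : 'cV[F]_d) => c *: v) (Mflat M).
Proof.
case: M_submod => -[M0 MD MZ] _ _ _; split.
- by move=> k; rewrite /Mcomp monalgU0.
- move=> u w Mu Mw k; rewrite /Mcomp monalgUD.
  by apply: MD; [apply: Mu | apply: Mw].
- by move=> c u Mu k; rewrite /Mcomp -tscale_monomial; apply/MZ/Mu.
Qed.

Lemma Mflat_par (v : 'cV[F]_d) : Mflat M v -> Mflat M (P *m v).
Proof.
case: M_submod => _ Mpar _ _ Mv k.
apply: (@submod_monomial_scale ((-1) ^+ mpar k)); first by rewrite signr_eq0.
by rewrite -tpar_monomial; apply/Mpar/Mv.
Qed.

Lemma Mflat_xi (a b : Idx m n) (v : 'cV[F]_d) :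
  Mflat M v -> Mflat M (xi a b *m v).
Proof.
case: M_submod => _ _ Mpd Mod Mv k.
have sign_neq0 e : (-1) ^+ e != 0 :> F by rewrite signr_eq0.
case: a => j; case: b => i.
- have := Mpd (xmon j) i _ (Mv k); rewrite gact_pd_monomial act_pd_xmon.
  by rewrite -{1}[xi _ _ *m v]scale1r; apply: Mflat_cancel_tm Mv (oner_neq0 _).
- have := Mod (xmon j) i _ (Mv k); rewrite gact_od_monomial act_od_xmon.
  exact: Mflat_cancel_tm Mv (sign_neq0 _).
- have := Mpd (ymon j) i _ (Mv k); rewrite gact_pd_monomial act_pd_ymon.
  exact: Mflat_cancel_tm Mv (sign_neq0 _).
- have := Mod (ymon j) i _ (Mv k); rewrite gact_od_monomial act_od_ymon.
  by rewrite -{1}[xi _ _ *m v]scale1r; apply: Mflat_cancel_tm Mv (oner_neq0 _).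
Qed.

Lemma submod_full_of_Mflat : (forall v, Mflat M v) -> forall u, M u.
Proof.
case: M_submod => -[M0 MD _] _ _ _ Mflat_all u; rewrite (monalgE u).
elim: (msupp u : seq _) => [|k s IH]; first by rewrite big_nil.
by rewrite big_cons; apply: MD IH; apply: Mflat_all.
Qed.

End Submodule.

Theorem mainTheorem3 (F : closedFieldType) (m n d : nat)
  (xi : Idx m n -> Idx m n -> 'M[F]_d) (P : 'M[F]_d)
  (M : TL F m n d -> Prop) :
  [pchar F] =i pred0 -> (0 < m)%N -> (0 < n)%N ->
  is_gl_super_rep xi P -> is_irreducible xi P ->
  is_g_submodule xi P M ->
  (exists v : 'cV[F]_d, v != 0 /\ Mflat M v) ->
  forall u : TL F m n d, M u.
Proof.
move=> _ _ _ _ [_ irr] M_submod [v [v_neq0 Mv]].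
apply: (submod_full_of_Mflat M_submod).
have [Mflat0|] := irr _ (Mflat_subspace M_submod) (Mflat_par M_submod)
                        (Mflat_xi M_submod) => //.
by move: v_neq0; rewrite (Mflat0 v Mv) eqxx.
Qed.
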